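(* Let $S$ be a real symmetric positive definite $n\times n$ matrix which is irreducible. Define \[{\operatorname{mr_{dual}}}(S)=\min\{\operatorname{rank}(\hat S)\mid S=E-\hat S,\ \hat S\ge 0,\ E\ge 0,\ E\text{ diagonal}\},\] where $\hat S,E$ range over real symmetric $n\times n$ matrices. Then ${\operatorname{mr_{dual}}}(S)=n-1$ if and only if $S\succeq_e 0$.
   Context: $M\ge0$ means positive semidefinite. A square matrix is irreducible if it cannot be brought into block-diagonal form (with at least two diagonal blocks) by a simultaneous permutation of its rows and columns. For a real square matrix $M$, $M\succeq_e 0$ means that the off-diagonal entries of $M$ are all $\ge 0$, or can be made so by changing the signs of selected rows and the corresponding columns (i.e. there is a diagonal matrix $P$ with diagonal entries $\pm1$ such that $PMP$ has all off-diagonal entries $\ge 0$). *)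

From HB Require Import structures.
From mathcomp Require Import all_boot all_order all_algebra all_fingroup.
From mathcomp Require Import reals.
Set Implicit Arguments. Unset Strict Implicit. Unset Printing Implicit Defensive.
Import Order.TTheory GRing.Theory Num.Theory.
Local Open Scope ring_scope.

Section Defs.
Variable R : realType.

Definition symmetric_mx n (A : 'M[R]_n) : Prop := A^T = A.

Definition psd_mx n (A : 'M[R]_n) : Prop :=
  symmetric_mx A /\ forall x : 'cV[R]_n, 0 <= (x^T *m A *m x) 0 0.

Definition pd_mx n (A : 'M[R]_n) : Prop :=
  symmetric_mx A /\ forall x : 'cV[R]_n, x != 0 -> 0 < (x^T *m A *m x) 0 0.

(* Irreducible: no simultaneous permutation of rows and columns brings A into
   block-diagonal form with (at least) two diagonal blocks, i.e. blocks of
   sizes k and n-k with 0 < k < n. *)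
Definition irreducible_mx n (A : 'M[R]_n) : Prop :=
  ~ exists (s : 'S_n) (k : nat), [/\ (0 < k)%N, (k < n)%N &
      forall i j : 'I_n, ((i < k)%N != (j < k)%N) ->
        (col_perm s (row_perm s A)) i j = 0].

Definition sign_nonneg_mx n (A : 'M[R]_n) : Prop :=
  exists d : 'rV[R]_n, (forall i, d 0 i = 1 \/ d 0 i = -1) /\
    forall i j : 'I_n, i != j -> 0 <= (diag_mx d *m A *m diag_mx d) i j.

Definition mr_dual_admissible n (S : 'M[R]_n) (r : nat) : Prop :=
  exists E Shat : 'M[R]_n,
    [/\ symmetric_mx E, symmetric_mx Shat, S = E - Shat, psd_mx Shat &
        [/\ psd_mx E, is_diag_mx E & \rank Shat = r]].

Definition mr_dual_is n (S : 'M[R]_n) (k : nat) : Prop :=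
  mr_dual_admissible S k /\ forall r, mr_dual_admissible S r -> (k <= r)%N.

End Defs.

From HB Require Import structures.
From mathcomp Require Import all_boot all_order all_algebra all_fingroup.
From mathcomp Require Import reals.
From mathcomp Require Import ring lra zify.
Set Implicit Arguments. Unset Strict Implicit. Unset Printing Implicit Defensive.
Import Order.TTheory GRing.Theory Num.Theory.
Local Open Scope ring_scope.

(* If [S] is sign-nonnegative with signature [d] and [D = diag d], then [D S D]
   has nonnegative off-diagonal entries, so [E - S = D L D] with [L] the
   Laplacian of [D S D] and [E] diagonal; this shift is positive semidefinite
   with [d] in its left kernel, so it has rank at most [n - 1].  No admissible
   [Shat] has smaller rank: otherwise some nonzero kernel vector [x] of [Shat]
   vanishes at some index; replacing [x] by [D |x|] does not increase the
   quadratic form, so [D |x|] is again a kernel vector, and then the zero set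
   of [x] is a union of connected components of the graph of [S],
   contradicting irreducibility.
   If [S] is not sign-nonnegative, a diagonal shift of rank at most [n - 2] is
   built by induction on [n]: deleting an index [v] and adding [t s s^T], where
   [s] is the deleted column and [t > 0] is small, keeps [S] positive definite
   and keeps its off-diagonal sign pattern, and a shift of the reduced matrix
   lifts back with the rank growing by one.  Either a negative triangle
   [S i j S j k S i k < 0] survives the reduction, or there is none and then a
   signature of the reduced matrix would extend to [S]; the base case is a
   3x3 matrix with a negative triangle. *)

Section MrDual.
Variable R : realType.

Lemma addmxE m n (A B : 'M[R]_(m, n)) i j : (A + B) i j = A i j + B i j.
Proof. by rewrite mxE. Qed.

Lemma oppmxE m n (A : 'M[R]_(m, n)) i j : (- A) i j = - A i j.
Proof. by rewrite mxE. Qed.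

Lemma scalemxE m n c (A : 'M[R]_(m, n)) i j : (c *: A) i j = c * A i j.
Proof. by rewrite mxE. Qed.

Lemma outer_mxE m n (u : 'cV[R]_m) (w : 'cV[R]_n) i j : (u *m w^T) i j = u i 0 * w j 0.
Proof. by rewrite mxE big_ord1 mxE. Qed.

Lemma symmetric_mxE n (A : 'M[R]_n) i j : symmetric_mx A -> A i j = A j i.
Proof. by move=> sA; rewrite -[in LHS]sA mxE. Qed.

Lemma quad_formE n (A : 'M[R]_n) (x : 'cV[R]_n) :
  (x^T *m A *m x) 0 0 = \sum_i \sum_j x i 0 * A i j * x j 0.
Proof.
rewrite mxE exchange_big /=; apply: eq_bigr => j _.
by rewrite mxE mulr_suml; apply: eq_bigr => i _; rewrite mxE.
Qed.

Lemma trmx_mul_self_ge0 n (y : 'cV[R]_n) : 0 <= (y^T *m y) 0 0.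
Proof. by rewrite mxE; apply: sumr_ge0 => k _; rewrite mxE -expr2 sqr_ge0. Qed.

Lemma trmx_mul_self_eq0 n (y : 'cV[R]_n) : (y^T *m y) 0 0 = 0 -> y = 0.
Proof.
have sq_ge0 k : true -> 0 <= y^T 0 k * y k 0 by rewrite mxE -expr2 sqr_ge0.
rewrite mxE => /(psumr_eq0P sq_ge0) sq0; apply/matrixP => i j; rewrite ord1 mxE.
by have /eqP := sq0 i isT; rewrite mxE mulf_eq0 orbb => /eqP.
Qed.

Lemma psd_mx0 n : psd_mx (0 : 'M[R]_n).
Proof. by split=> [|x]; rewrite ?/symmetric_mx ?trmx0 // mulmx0 mul0mx mxE. Qed.

Lemma psd_mxD n (A B : 'M[R]_n) : psd_mx A -> psd_mx B -> psd_mx (A + B).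
Proof.
move=> [sA pA] [sB pB]; split; first by rewrite /symmetric_mx linearD /= sA sB.
by move=> x; rewrite mulmxDr mulmxDl addmxE addr_ge0.
Qed.

Lemma psd_mxZ n c (A : 'M[R]_n) : 0 <= c -> psd_mx A -> psd_mx (c *: A).
Proof.
move=> c0 [sA pA]; split; first by rewrite /symmetric_mx linearZ /= sA.
by move=> x; rewrite -scalemxAr -scalemxAl scalemxE mulr_ge0.
Qed.

Lemma psd_mx_outer n (u : 'cV[R]_n) : psd_mx (u *m u^T).
Proof.
split; first by rewrite /symmetric_mx trmx_mul trmxK.
move=> x; have -> : x^T *m (u *m u^T) *m x = (u^T *m x)^T *m (u^T *m x).
  by rewrite trmx_mul trmxK !mulmxA.
exact: trmx_mul_self_ge0.
Qed.

Lemma psd_mx_congr m n (B : 'M[R]_(m, n)) (A : 'M[R]_m) :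
  psd_mx A -> psd_mx (B^T *m A *m B).
Proof.
move=> [sA pA]; split; first by rewrite /symmetric_mx !trmx_mul trmxK sA mulmxA.
move=> x; have -> : x^T *m (B^T *m A *m B) *m x = (B *m x)^T *m A *m (B *m x).
  by rewrite trmx_mul !mulmxA.
exact: pA.
Qed.

Lemma pd_psd_mx n (A : 'M[R]_n) : pd_mx A -> psd_mx A.
Proof.
move=> [sA pA]; split=> // x; have [->|x0] := eqVneq x 0.
  by rewrite mulmx0 mxE.
exact/ltW/pA.
Qed.

Lemma pd_mxDr n (A B : 'M[R]_n) : pd_mx A -> psd_mx B -> pd_mx (A + B).
Proof.
move=> [sA pA] [sB pB]; split; first by rewrite /symmetric_mx linearD /= sA sB.
move=> x x0; rewrite mulmxDr mulmxDl addmxE.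
by have := pA x x0; have := pB x; lra.
Qed.

Lemma pd_mx_congr m n (B : 'M[R]_(m, n)) (A : 'M[R]_n) :
  B *m B^T = 1%:M -> pd_mx A -> pd_mx (B *m A *m B^T).
Proof.
move=> BBt [sA pA]; split; first by rewrite /symmetric_mx !trmx_mul trmxK sA mulmxA.
move=> x x0; have -> : x^T *m (B *m A *m B^T) *m x = (B^T *m x)^T *m A *m (B^T *m x).
  by rewrite trmx_mul trmxK !mulmxA.
apply: pA; apply: contraNneq x0 => Btx0.
by rewrite -[x]mul1mx -BBt -mulmxA Btx0 mulmx0.
Qed.

Lemma pd_mx_diag_gt0 n (A : 'M[R]_n) i : pd_mx A -> 0 < A i i.
Proof.
case=> _ pA; have e0 : delta_mx i 0 != 0 :> 'cV[R]_n.
  by apply/eqP => /matrixP/(_ i 0)/eqP; rewrite !mxE !eqxx oner_eq0.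
by have := pA _ e0; rewrite trmx_delta -rowE -colE !mxE.
Qed.

(* If [x^T A x = 0], the quadratic form [t |-> (x + t A x)^T A (x + t A x)]
   is [2 t |A x|^2 + t^2 (A x)^T A (A x)], which is negative for small [t < 0]
   unless [A x = 0]. *)
Lemma psd_mx_ker n (A : 'M[R]_n) (x : 'cV[R]_n) :
  psd_mx A -> (x^T *m A *m x) 0 0 = 0 -> A *m x = 0.
Proof.
move=> [sA pA] qx; set y := A *m x.
pose a := (y^T *m y) 0 0; pose b := (y^T *m A *m y) 0 0.
have a_ge0 : 0 <= a := trmx_mul_self_ge0 y.
have b_ge0 : 0 <= b := pA y.
have q_ge0 t : 0 <= 2 * t * a + t ^+ 2 * b.
  have xA : x^T *m A = y^T by rewrite trmx_mul sA.
  have := pA (x + t *: y).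
  have -> : (x + t *: y)^T *m A *m (x + t *: y) =
      x^T *m A *m x + (2 * t) *: (y^T *m y) + t ^+ 2 *: (y^T *m A *m y).
    rewrite [(x + _)^T]linearD /= [(t *: y)^T]linearZ /= !mulmxDl !mulmxDr -!scalemxAl -!scalemxAr.
    rewrite !scalerA xA -[y^T *m A *m x]mulmxA -/y -!addrA; congr (_ + _).
    by rewrite addrA -scalerDl; congr (_ *: _ + _); ring.
  by rewrite !addmxE !scalemxE qx add0r.
apply: trmx_mul_self_eq0; apply/eqP; rewrite -/a eq_le a_ge0 andbT leNgt.
apply/negP => a_gt0; have := q_ge0 (- (a / (b + 1))).
have b1 : 0 < b + 1 by lra.
have : a / (b + 1) * b <= a by rewrite mulrAC ler_pdivrMr // ler_pM2l //; lra.
have : 0 < a / (b + 1) by rewrite divr_gt0.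
nra.
Qed.

Lemma mxrank_row_mx m n1 n2 (A : 'M[R]_(m, n1)) (B : 'M[R]_(m, n2)) :
  (\rank (row_mx A B) <= \rank A + \rank B)%N.
Proof.
rewrite -mxrank_tr tr_row_mx -addsmxE -(mxrank_tr A) -(mxrank_tr B).
exact: (mxrank_adds_leqif _ _).1.
Qed.

Lemma exists_left_kernel_vec m n (A : 'M[R]_(m, n)) :
  (\rank A < m)%N -> exists2 u : 'rV[R]_m, u != 0 & u *m A = 0.
Proof.
rewrite ltnNge row_leq_rank -kermx_eq0 => /rowV0Pn[u /sub_kermxP uA u0].
by exists u.
Qed.

(** * Sign-nonnegative matrices: a shift of rank [n - 1] *)

Lemma sign_sqr (x : R) : x = 1 \/ x = -1 -> x * x = 1.
Proof. by case=> ->; rewrite ?mulr1 ?mulrNN ?mulr1. Qed.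

Lemma diag_conj_mxE n (d : 'rV[R]_n) (A : 'M[R]_n) i j :
  (diag_mx d *m A *m diag_mx d) i j = d 0 i * A i j * d 0 j.
Proof. by rewrite mul_mx_diag mxE mul_diag_mx mxE. Qed.

Lemma sign_nonneg_mx_triangle n (S : 'M[R]_n) i j k :
  sign_nonneg_mx S -> i != j -> j != k -> i != k -> 0 <= S i j * S j k * S i k.
Proof.
move=> [d [d_pm1 dS]] ij jk ik.
have := mulr_ge0 (mulr_ge0 (dS _ _ ij) (dS _ _ jk)) (dS _ _ ik); rewrite !diag_conj_mxE.
have -> : d 0 i * S i j * d 0 j * (d 0 j * S j k * d 0 k) * (d 0 i * S i k * d 0 k)
  = (d 0 i * d 0 i) * (d 0 j * d 0 j) * (d 0 k * d 0 k) * (S i j * S j k * S i k) by ring.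
by rewrite (sign_sqr (d_pm1 i)) (sign_sqr (d_pm1 j)) (sign_sqr (d_pm1 k)) !mul1r.
Qed.

Definition laplacian_mx n (W : 'M[R]_n) := diag_mx (\row_i \sum_j W i j) - W.

(* Twice the quadratic form of the Laplacian is [\sum_(i,j) W i j (x i - x j)^2]. *)
Lemma laplacian_mx_psd n (W : 'M[R]_n) :
  symmetric_mx W -> (forall i j, i != j -> 0 <= W i j) -> psd_mx (laplacian_mx W).
Proof.
move=> sW W_ge0; split.
  by rewrite /symmetric_mx /laplacian_mx linearB /= tr_diag_mx sW.
move=> x; set T := \sum_i \sum_j W i j * x i 0 ^+ 2.
set C := \sum_i \sum_j x i 0 * W i j * x j 0.
have -> : (x^T *m laplacian_mx W *m x) 0 0 = T - C.
  rewrite /laplacian_mx mulmxBr mulmxBl.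
  rewrite addmxE oppmxE; congr (_ - _); last exact: quad_formE.
  rewrite mul_mx_diag mxE; apply: eq_bigr => i _; rewrite !mxE mulr_sumr mulr_suml.
  by apply: eq_bigr => j _; ring.
have T_sym : T = \sum_i \sum_j W i j * x j 0 ^+ 2.
  rewrite /T exchange_big /=; apply: eq_bigr => i _; apply: eq_bigr => j _.
  by rewrite (symmetric_mxE _ _ sW).
have -> : T - C = (\sum_i \sum_j W i j * (x i 0 - x j 0) ^+ 2) / 2.
  apply: (canRL (mulfK _)); rewrite ?pnatr_eq0 //.
  rewrite mulr_natr mulr2n {2}T_sym /T /C -!sumrB -big_split /=.
  apply: eq_bigr => i _; rewrite -!sumrB -big_split /=.
  by apply: eq_bigr => j _; ring.
apply: divr_ge0 => //; apply: sumr_ge0 => i _; apply: sumr_ge0 => j _.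
by have [<-|ij] := eqVneq i j; rewrite ?subrr ?expr0n ?mulr0 // mulr_ge0 ?sqr_ge0 ?W_ge0.
Qed.

Lemma const_mx_mul_laplacian n (W : 'M[R]_n) :
  symmetric_mx W -> (const_mx 1 : 'rV[R]_n) *m laplacian_mx W = 0.
Proof.
move=> sW; rewrite /laplacian_mx mulmxBr mul_mx_diag; apply/rowP => j.
rewrite !mxE mul1r; apply/eqP; rewrite subr_eq0; apply/eqP.
by apply: eq_bigr => i _; rewrite mxE mul1r (symmetric_mxE _ _ sW).
Qed.

Lemma diag_mx_symmetric n (E : 'M[R]_n) : is_diag_mx E -> symmetric_mx E.
Proof. by move=> /diag_mxP[d ->]; rewrite /symmetric_mx tr_diag_mx. Qed.

Lemma diag_shift_admissible n (S E : 'M[R]_n) :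
  pd_mx S -> is_diag_mx E -> psd_mx (E - S) -> mr_dual_admissible S (\rank (E - S)).
Proof.
move=> pdS dE pES; exists E, (E - S); split; first exact: diag_mx_symmetric.
- by case: pES.
- by rewrite opprB addrC subrK.
- exact: pES.
split=> //; have -> : E = S + (E - S) by rewrite addrC subrK.
exact: psd_mxD (pd_psd_mx pdS) pES.
Qed.

Lemma sign_nonneg_mx_shift n (S : 'M[R]_n) : symmetric_mx S -> sign_nonneg_mx S ->
  exists E, [/\ is_diag_mx E, psd_mx (E - S) & (\rank (E - S)%R <= n.-1)%N].
Proof.
move=> sS [d [d_pm1 dS]]; set D := diag_mx d; set W := D *m S *m D.
have DD : D *m D = 1%:M.
  rewrite mulmx_diag -diag_const_mx; congr diag_mx.
  by apply/rowP => i; rewrite !mxE sign_sqr.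
have sW : symmetric_mx W by rewrite /symmetric_mx /W !trmx_mul tr_diag_mx sS mulmxA.
set E := diag_mx (\row_i \sum_j W i j).
have DED : D *m E *m D = E.
  rewrite !mulmx_diag; congr diag_mx; apply/rowP => i.
  by rewrite !mxE mulrAC sign_sqr ?mul1r.
have ES : E - S = D^T *m laplacian_mx W *m D.
  by rewrite tr_diag_mx mulmxBr mulmxBl DED /W !mulmxA DD mul1mx -mulmxA DD mulmx1.
exists E; split; first exact: diag_mx_is_diag.
  by rewrite ES; apply/psd_mx_congr/laplacian_mx_psd => // i j /dS.
have [n0|n_gt0] := posnP n; first by apply: leq_trans (rank_leq_row _) _; rewrite n0.
set u := (const_mx 1 : 'rV[R]_n) *m D.
have u0 : u != 0.
  apply/eqP => /rowP/(_ (Ordinal n_gt0)); rewrite /u /D mul_mx_diag !mxE mul1r.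
  by case: (d_pm1 (Ordinal n_gt0)) => ->; apply/eqP; rewrite ?oppr_eq0 oner_eq0.
have uES : u *m (E - S) = 0.
  rewrite ES tr_diag_mx /u !mulmxA -[_ *m D *m D]mulmxA DD mulmx1.
  by rewrite const_mx_mul_laplacian // mul0mx.
have := mulmx0_rank_max uES; rewrite rank_rV u0 add1n.
move=> rk; rewrite -ltnS (ltn_predK n_gt0); exact: rk.
Qed.

(** * Sign-nonnegative irreducible matrices: no shift of rank below [n - 1] *)

Definition signed_abs n (d : 'rV[R]_n) (x : 'cV[R]_n) := \col_i (d 0 i * `|x i 0|).

Section SignedAbs.
Variables (n : nat) (A : 'M[R]_n) (d : 'rV[R]_n).
Hypothesis d_pm1 : forall i, d 0 i = 1 \/ d 0 i = -1.
Hypothesis A_offdiag : forall i j, i != j -> d 0 i * A i j * d 0 j <= 0.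

Lemma quad_form_signed_abs_le (x : 'cV[R]_n) :
  ((signed_abs d x)^T *m A *m signed_abs d x) 0 0 <= (x^T *m A *m x) 0 0.
Proof.
have d_norm i : `|d 0 i| = 1 by case: (d_pm1 i) => ->; rewrite ?normrN normr1.
rewrite !quad_formE; apply: ler_sum => i _; apply: ler_sum => j _; rewrite !mxE.
have [<-|ij] := eqVneq i j.
  rewrite le_eqVlt; apply/orP; left; apply/eqP.
  transitivity (d 0 i * d 0 i * A i i * `|x i 0| ^+ 2); first by ring.
  by rewrite (sign_sqr (d_pm1 i)) mul1r real_normK ?num_real //; ring.
have -> : d 0 i * `|x i 0| * A i j * (d 0 j * `|x j 0|) =
    (d 0 i * A i j * d 0 j) * `|d 0 i * x i 0 * (d 0 j * x j 0)|.
  by rewrite !normrM !d_norm !mul1r; ring.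
have -> : x i 0 * A i j * x j 0 =
    (d 0 i * A i j * d 0 j) * (d 0 i * x i 0 * (d 0 j * x j 0)).
  transitivity ((d 0 i * d 0 i) * (d 0 j * d 0 j) * (x i 0 * A i j * x j 0)).
    by rewrite (sign_sqr (d_pm1 i)) (sign_sqr (d_pm1 j)) !mul1r.
  by ring.
by rewrite ler_wnM2l ?A_offdiag ?ler_norm.
Qed.

Lemma signed_abs_ker_support (x : 'cV[R]_n) a c :
  A *m signed_abs d x = 0 -> x a 0 = 0 -> A a c != 0 -> x c 0 = 0.
Proof.
move=> Aw0 xa0 Aac.
have d_neq0 i : d 0 i != 0 by case: (d_pm1 i) => ->; rewrite ?oppr_eq0 oner_eq0.
pose F j := - (d 0 a * A a j * d 0 j) * `|x j 0|.
have F_ge0 j : true -> 0 <= F j.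
  have [<-|aj] := eqVneq a j; first by rewrite /F xa0 normr0 mulr0.
  by rewrite /F mulr_ge0 ?oppr_ge0 ?A_offdiag.
have sumF : \sum_j F j = 0.
  have := congr1 (fun M : 'cV[R]_n => d 0 a * M a 0) Aw0; rewrite !mxE mulr_sumr mulr0 => Aw.
  transitivity (- \sum_j d 0 a * (A a j * signed_abs d x j 0)); last by rewrite Aw oppr0.
  by rewrite -sumrN; apply: eq_bigr => j _; rewrite /F !mxE; ring.
have /eqP := psumr_eq0P F_ge0 sumF (i := c) isT.
by rewrite /F mulf_eq0 oppr_eq0 !mulf_eq0 !(negbTE (d_neq0 _)) (negbTE Aac) normr_eq0 => /eqP.
Qed.

End SignedAbs.

Lemma exists_perm_set_first n (Z : {set 'I_n}) :
  exists s : 'S_n, forall a, (s a \in Z) = (a < #|Z|)%N.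
Proof.
case: n Z => [|n] Z; first by exists 1%g; case.
pose l := enum Z ++ enum (~: Z).
have size_l : size l = n.+1 by rewrite size_cat -!cardE cardsC card_ord.
have uniq_l : uniq l.
  by rewrite cat_uniq !enum_uniq andbT; apply/hasPn => a; rewrite !mem_enum inE.
have nth_inj : injective (fun a : 'I_n.+1 => nth ord0 l a).
  by move=> a b /eqP; rewrite nth_uniq ?size_l // => /eqP/val_inj.
exists (perm nth_inj) => a; rewrite permE nth_cat -cardE.
case: ltnP => [aZ|Za]; first by rewrite -mem_enum mem_nth -?cardE.
have : nth ord0 (enum (~: Z)) (a - #|Z|) \in enum (~: Z).
  by rewrite mem_nth // -cardE ltn_subLR // cardsC card_ord.
by rewrite mem_enum inE => /negbTE.
Qed.

Lemma irreducible_mx_cut n (S : 'M[R]_n) (Z : {set 'I_n}) a b :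
  symmetric_mx S -> irreducible_mx S -> a \in Z -> b \notin Z ->
  ~ (forall i j, i \in Z -> j \notin Z -> S i j = 0).
Proof.
move=> sS irrS aZ bZ S0; apply: irrS; have [s sZ] := exists_perm_set_first Z.
exists s, #|Z|; split.
- by apply/card_gt0P; exists a.
- rewrite -[n in (_ < n)%N]card_ord -cardsT; apply/proper_card; rewrite properT.
  by apply: contraNneq bZ => ->; rewrite inE.
move=> i j; rewrite !mxE -!sZ.
case: (boolP (s i \in Z)); case: (boolP (s j \in Z)) => //= jZ iZ _.
  exact: S0.
by rewrite symmetric_mxE // S0.
Qed.

Lemma mr_dual_admissible_rank_ge n (S : 'M[R]_n) r :
  symmetric_mx S -> irreducible_mx S -> sign_nonneg_mx S ->
  mr_dual_admissible S r -> (n.-1 <= r)%N.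
Proof.
move=> sS irrS [d [d_pm1 dS]] [E [Shat [_ sSh eS pSh [_ dE <-]]]].
have Shat_offdiag i j : i != j -> Shat i j = - S i j.
  have -> : Shat = E - S by rewrite eS opprB addrC subrK.
  by move=> ij; rewrite !mxE (is_diag_mxP dE) ?add0r.
have Shat_sign i j : i != j -> d 0 i * Shat i j * d 0 j <= 0.
  move=> ij; have := dS i j ij; rewrite diag_conj_mxE Shat_offdiag //.
  by rewrite mulrN mulNr oppr_le0.
rewrite leqNgt; apply/negP => rk.
have n_gt0 : (0 < n)%N by lia.
set i0 := Ordinal n_gt0.
have [y y0] : exists2 y : 'rV[R]_n,
    y != 0 & y *m row_mx Shat (delta_mx i0 0 : 'cV[R]_n) = 0.
  apply: exists_left_kernel_vec; apply: leq_ltn_trans (mxrank_row_mx _ _) _.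
  by rewrite mxrank_delta; lia.
rewrite mul_mx_row -row_mx0 => /eq_row_mx[ySh ye].
set x := y^T.
have Shx : Shat *m x = 0 by rewrite -{1}sSh -trmx_mul ySh trmx0.
have x_i0 : x i0 0 = 0 by move: ye; rewrite -colE => /matrixP/(_ 0 0); rewrite !mxE.
have [b xb] : exists b, x b 0 != 0.
  by have /rV0Pn[b yb] := y0; exists b; rewrite mxE.
have Sh_w : Shat *m signed_abs d x = 0.
  apply: (psd_mx_ker pSh); apply/le_anti; rewrite (proj2 pSh) andbT.
  have -> : 0 = (x^T *m Shat *m x) 0 0 by rewrite -mulmxA Shx mulmx0 mxE.
  exact: quad_form_signed_abs_le.
apply: (irreducible_mx_cut (Z := [set a | x a 0 == 0]) sS irrS (a := i0) (b := b)).
- by rewrite inE x_i0.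
- by rewrite inE.
move=> a c; rewrite !inE => /eqP xa xc; apply/eqP; apply: contraNT xc => Sac.
have [<-|ac] := eqVneq a c; first by rewrite xa.
apply/eqP; apply: (signed_abs_ker_support d_pm1 Shat_sign Sh_w xa).
by rewrite Shat_offdiag // oppr_eq0.
Qed.

(** * Eliminating an index *)

Section DeleteIndex.
Variables (n : nat) (v : 'I_n.+1).

Lemma row'1_mul m (A : 'M[R]_(n.+1, m)) : row' v 1%:M *m A = row' v A.
Proof. exact: esym (rowsubE _ _). Qed.

Lemma mul_tr_row'1 m (A : 'M[R]_(m, n.+1)) : A *m (row' v 1%:M)^T = col' v A.
Proof. by apply: trmx_inj; rewrite trmx_mul trmxK tr_col' row'1_mul. Qed.

Lemma row'1_mul_tr : row' v 1%:M *m (row' v 1%:M)^T = 1%:M :> 'M[R]_n.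
Proof. by rewrite mul_tr_row'1; apply/matrixP => p q; rewrite !mxE (inj_eq lift_inj). Qed.

Lemma tr_row'1_mulE m (A : 'M[R]_(n, m)) a j :
  ((row' v 1%:M)^T *m A) a j = if unlift v a is Some p then A p j else 0.
Proof.
rewrite mxE; case: unliftP => [p ->|->].
  rewrite (bigD1 p) //= big1 ?addr0 => [|q qp]; rewrite !mxE ?eqxx ?mul1r //.
  by rewrite (inj_eq lift_inj) (negbTE qp) mul0r.
by rewrite big1 // => q _; rewrite !mxE lift_eqF mul0r.
Qed.

Lemma embed_mxE (A : 'M[R]_n) a b :
  ((row' v 1%:M)^T *m A *m row' v 1%:M) a b =
  if (unlift v a, unlift v b) is (Some p, Some q) then A p q else 0.
Proof.
rewrite -mulmxA tr_row'1_mulE; case: (unlift v a) => [p|] //.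
rewrite -[_ *m _]trmxK trmx_mul mxE tr_row'1_mulE.
by case: (unlift v b) => [q|]; rewrite ?mxE.
Qed.

Definition reduce_mx t (S : 'M[R]_n.+1) : 'M[R]_n :=
  row' v (col' v S) + t *: (row' v (col v S) *m (row' v (col v S))^T).

Lemma reduce_mxE t (S : 'M[R]_n.+1) p q :
  reduce_mx t S p q = S (lift v p) (lift v q) + t * (S (lift v p) v * S (lift v q) v).
Proof. by rewrite addmxE scalemxE outer_mxE !mxE. Qed.

Lemma reduce_mx_pd t (S : 'M[R]_n.+1) : 0 <= t -> pd_mx S -> pd_mx (reduce_mx t S).
Proof.
move=> t_ge0 pdS; apply: pd_mxDr; last exact/psd_mxZ/psd_mx_outer.
have -> : row' v (col' v S) = row' v 1%:M *m S *m (row' v 1%:M)^T.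
  by rewrite mul_tr_row'1 row'1_mul; apply/matrixP => p q; rewrite !mxE.
exact: pd_mx_congr row'1_mul_tr pdS.
Qed.

End DeleteIndex.

Definition diag_shift_corank n (S : 'M[R]_n) (k : nat) : Prop :=
  exists E, [/\ is_diag_mx E, psd_mx (E - S) & (\rank (E - S)%R + k <= n)%N].

Lemma diag_shift_corank_diag n (S : 'M[R]_n) : is_diag_mx S -> diag_shift_corank S n.
Proof. by move=> dS; exists S; rewrite subrr mxrank0; split=> //; apply: psd_mx0. Qed.

(* [E - S = t^-1 u u^T + L^T (E' - reduce_mx v t S) L] with [L = row' v 1],
   [u v = 1] and [u a = - t S a v] otherwise; this forces [E v v = S v v + t^-1]. *)
Lemma diag_shift_corank_reduce n (v : 'I_n.+1) t (S : 'M[R]_n.+1) k :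
  0 < t -> symmetric_mx S -> diag_shift_corank (reduce_mx v t S) k ->
  diag_shift_corank S k.
Proof.
move=> t_gt0 sS [E' [dE' pM rkM]]; set M := E' - _ in pM rkM.
set L := row' v 1%:M : 'M[R]_(n, n.+1).
pose u : 'cV[R]_n.+1 := \col_a (if a == v then 1 else - t * S a v).
pose E := L^T *m E' *m L + (S v v + t^-1) *: delta_mx v v.
have t_neq0 : t != 0 by rewrite gt_eqF.
have ES : E - S = t^-1 *: (u *m u^T) + L^T *m M *m L.
  apply/matrixP => a b; rewrite !addmxE !oppmxE !scalemxE !embed_mxE outer_mxE.
  rewrite /u !mxE.
  case: (unliftP v a) => [p ->|->]; case: (unliftP v b) => [q ->|->];
    rewrite ?liftK ?unlift_none ?lift_eqF ?eqxx /=.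
  - by rewrite addmxE oppmxE reduce_mxE; field.
  - by field.
  - by rewrite (symmetric_mxE _ _ sS); field.
  - by field.
exists E; split.
- apply/is_diag_mxP => a b ab; rewrite addmxE scalemxE embed_mxE !mxE.
  case: (unliftP v a) ab => [p ->|->] ab; case: (unliftP v b) ab => [q ->|->] ab;
    rewrite ?liftK ?unlift_none ?lift_eqF ?eqxx ?andbF ?mulr0 ?addr0 //.
    by apply: (is_diag_mxP dE'); apply: contraNneq ab => /val_inj ->.
  by rewrite eqxx in ab.
- rewrite ES; apply: psd_mxD; last exact: psd_mx_congr.
  by apply: psd_mxZ; [rewrite invr_ge0 ltW | exact: psd_mx_outer].
have rk_outer : (\rank (t^-1 *: (u *m u^T)) <= 1)%N.
  by rewrite (leq_trans (mxrank_scale _ _)) // (leq_trans (mxrankM_maxl _ _)) ?rank_leq_col.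
have rk_embed : (\rank (L^T *m M *m L) <= \rank M)%N.
  by rewrite (leq_trans (mxrankM_maxl _ _)) ?mxrankM_maxr.
rewrite ES; apply: leq_trans (leq_add (mxrank_add _ _) (leqnn k)) _.
by rewrite -addnA (leq_trans (leq_add rk_outer (leq_add rk_embed (leqnn k)))).
Qed.

(** * Matrices that are not sign-nonnegative: a shift of rank [n - 2] *)

Lemma exists_small_pos (I : finType) (P : pred I) (f g : I -> R) :
  (forall i, P i -> 0 < f i) -> exists2 t, 0 < t & forall i, P i -> t * g i < f i.
Proof.
move=> f_gt0; pose h i := f i / (`|g i| + 1).
have g1_gt0 i : 0 < `|g i| + 1 by have := normr_ge0 (g i); lra.
pose t := \big[Num.min/1]_(i | P i) h i.
have t_gt0 : 0 < t by apply: lt_bigmin => [|i Pi]; [exact: ltr01 | rewrite divr_gt0 ?f_gt0].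
exists t => // i Pi; apply: (le_lt_trans (y := h i * `|g i|)).
  apply: le_trans (ler_wpM2l (ltW t_gt0) (ler_norm _)) _.
  exact: ler_wpM2r (normr_ge0 _) _ _ (bigmin_le_cond 1 h Pi).
by rewrite /h mulrAC ltr_pdivrMr // ltr_pM2l ?f_gt0 //; lra.
Qed.

Lemma perturb_sign (x y : R) : x != 0 -> `|y| < `|x| -> 0 < (x + y) * x.
Proof.
move=> x0; case: (ltrgtP x 0) => [x_lt0|x_gt0|x_eq0]; last by rewrite x_eq0 eqxx in x0.
  by rewrite (ltr0_norm x_lt0) ltr_norml => /andP[]; nra.
by rewrite (gtr0_norm x_gt0) ltr_norml => /andP[]; nra.
Qed.

Definition sign_stable_reduction n (v : 'I_n.+1) t (S : 'M[R]_n.+1) :=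
  forall p q, S (lift v p) (lift v q) != 0 ->
    0 < reduce_mx v t S p q * S (lift v p) (lift v q).

Lemma exists_sign_stable_reduction n (v : 'I_n.+1) (S : 'M[R]_n.+1) :
  exists2 t, 0 < t & sign_stable_reduction v t S.
Proof.
pose F (pq : 'I_n * 'I_n) := S (lift v pq.1) (lift v pq.2).
have [t t_gt0 tF] : exists2 t, 0 < t & forall pq, F pq != 0 ->
    t * `|S (lift v pq.1) v * S (lift v pq.2) v| < `|F pq|.
  by apply: exists_small_pos => pq; rewrite normr_gt0.
exists t => // p q Fpq; rewrite reduce_mxE; apply: (perturb_sign Fpq).
by rewrite [`|t * _|]normrM gtr0_norm //; exact: (tF (p, q) Fpq).
Qed.

Lemma nonneg_mul_same_sign (a b x y : R) :
  0 < x * y -> 0 <= a * x * b -> 0 <= a * y * b.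
Proof.
move=> xy axb; have x0 : x != 0 by apply: contraTneq xy => ->; rewrite mul0r ltxx.
have := mulr_ge0 axb (ltW xy).
have -> : a * x * b * (x * y) = a * y * b * x ^+ 2 by ring.
by rewrite pmulr_lge0 // lt0r sqrf_eq0 x0 sqr_ge0.
Qed.

Lemma exists_common_sign (I : finType) (c : I -> R) :
  (forall p q, 0 <= c p * c q) -> exists2 s, s = 1 \/ s = -1 & forall q, 0 <= s * c q.
Proof.
move=> cc; case: (pickP (fun p => c p != 0)) => [p /= cp|c0]; last first.
  by exists 1 => [|q]; [left | move/negbFE/eqP: (c0 q) => ->; rewrite mulr0].
exists (Num.sg (c p)).
  by case: (ltrgtP (c p) 0) cp => [/ltr0_sg|/gtr0_sg|->]; [right|left|].
move=> q; have := cc p q; rewrite {1}[c p]numEsg mulrAC pmulr_lge0 //.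
by rewrite normr_gt0.
Qed.

Lemma sign_nonneg_mx_extend n (v : 'I_n.+1) (S : 'M[R]_n.+1) (d : 'rV[R]_n) s :
  symmetric_mx S -> (forall p, d 0 p = 1 \/ d 0 p = -1) -> s = 1 \/ s = -1 ->
  (forall p q, p != q -> 0 <= d 0 p * S (lift v p) (lift v q) * d 0 q) ->
  (forall p, 0 <= s * (d 0 p * S (lift v p) v)) -> sign_nonneg_mx S.
Proof.
move=> sS d_pm1 s_pm1 d_off s_off.
exists (\row_a if unlift v a is Some p then d 0 p else s); split.
  by move=> a; rewrite mxE; case: unlift.
move=> a b ab; rewrite diag_conj_mxE !mxE.
case: (unliftP v a) ab => [p ->|->] ab; case: (unliftP v b) ab => [q ->|->] ab;
  rewrite ?liftK ?unlift_none.
- by apply: d_off; apply: contraNneq ab => ->.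
- by rewrite mulrC; apply: s_off.
- by rewrite (symmetric_mxE _ _ sS) -mulrA [S _ _ * _]mulrC; apply: s_off.
- by rewrite eqxx in ab.
Qed.

(* Without negative triangles, a signature of the reduced matrix extends to [S]:
   the signs of the deleted column [S (lift v p) v] are then pairwise consistent. *)
Lemma sign_nonneg_mx_reduce n (v : 'I_n.+1) t (S : 'M[R]_n.+1) :
  0 < t -> symmetric_mx S -> sign_stable_reduction v t S ->
  (forall i j k, 0 <= S i j * S j k * S i k) ->
  sign_nonneg_mx (reduce_mx v t S) -> sign_nonneg_mx S.
Proof.
move=> t_gt0 sS st tri [d [d_pm1 dR]].
have d_off p q : p != q -> 0 <= d 0 p * S (lift v p) (lift v q) * d 0 q.
  move=> pq; have := dR p q pq; rewrite diag_conj_mxE.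
  have [->|Spq] := eqVneq (S (lift v p) (lift v q)) 0; first by rewrite mulr0 mul0r.
  exact: nonneg_mul_same_sign (st _ _ Spq).
pose c p := d 0 p * S (lift v p) v.
have cc p q : 0 <= c p * c q.
  have [<-|pq] := eqVneq p q; first by rewrite -expr2 sqr_ge0.
  have [A0|A0] := eqVneq (S (lift v p) (lift v q)) 0.
    have := dR p q pq; rewrite diag_conj_mxE reduce_mxE A0 add0r.
    have -> : d 0 p * (t * (S (lift v p) v * S (lift v q) v)) * d 0 q = t * (c p * c q).
      by rewrite /c; ring.
    by rewrite pmulr_rge0.
  have := mulr_ge0 (d_off p q pq) (tri (lift v p) (lift v q) v).
  have -> : d 0 p * S (lift v p) (lift v q) * d 0 q *
      (S (lift v p) (lift v q) * S (lift v q) v * S (lift v p) v) =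
      c p * c q * S (lift v p) (lift v q) ^+ 2 by rewrite /c; ring.
  by rewrite pmulr_lge0 // lt0r sqrf_eq0 A0 sqr_ge0.
have [s s_pm1 s_c] := exists_common_sign cc.
exact: sign_nonneg_mx_extend sS d_pm1 s_pm1 d_off s_c.
Qed.

Lemma sign_stable_reduction_triangle n (v : 'I_n.+1) t (S : 'M[R]_n.+1) p q r :
  sign_stable_reduction v t S ->
  S (lift v p) (lift v q) * S (lift v q) (lift v r) * S (lift v p) (lift v r) < 0 ->
  reduce_mx v t S p q * reduce_mx v t S q r * reduce_mx v t S p r < 0.
Proof.
move=> st neg.
have Spq : S (lift v p) (lift v q) != 0 by apply: contraTneq neg => ->; rewrite !mul0r ltxx.
have Sqr : S (lift v q) (lift v r) != 0 by apply: contraTneq neg => ->; rewrite mulr0 mul0r ltxx.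
have Spr : S (lift v p) (lift v r) != 0 by apply: contraTneq neg => ->; rewrite mulr0 ltxx.
have := mulr_gt0 (mulr_gt0 (st _ _ Spq) (st _ _ Sqr)) (st _ _ Spr).
nra.
Qed.

Lemma pd_mx_neg_triangle_neq n (S : 'M[R]_n) i j k :
  pd_mx S -> S i j * S j k * S i k < 0 -> [/\ i != j, j != k & i != k].
Proof.
move=> pdS neg; have sS := proj1 pdS.
split; apply/eqP => e; move: neg; rewrite e.
- by have := pd_mx_diag_gt0 j pdS; rewrite -mulrA -expr2; nra.
- by have := pd_mx_diag_gt0 k pdS; rewrite mulrAC -expr2; nra.
- by have := pd_mx_diag_gt0 k pdS; rewrite (symmetric_mxE j k sS) -expr2; nra.
Qed.

Lemma ord3_pair (a b i j k : 'I_3) :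
  a != b -> a != k -> b != k -> i != j -> i != k -> j != k ->
  (a == i) && (b == j) || (a == j) && (b == i).
Proof. by move: a b i j k; do 5! case=> [[|[|[|?]]] ?] //. Qed.

(* The weight [t] is chosen so that the reduced 2x2 matrix is diagonal. *)
Lemma neg_triangle3_corank (S : 'M[R]_3) i j k :
  symmetric_mx S -> i != j -> j != k -> i != k -> S i j * S j k * S i k < 0 ->
  diag_shift_corank S 2.
Proof.
move=> sS ij jk ik neg.
have Sjk : S j k != 0 by apply: contraTneq neg => ->; rewrite mulr0 mul0r ltxx.
have Sik : S i k != 0 by apply: contraTneq neg => ->; rewrite mulr0 ltxx.
pose t := - S i j / (S i k * S j k).
have t_gt0 : 0 < t.
  have -> : t = - (S i j * S j k * S i k) / (S i k * S j k) ^+ 2.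
    by rewrite /t; field; rewrite Sik Sjk.
  by rewrite divr_gt0 ?oppr_gt0 // lt0r sqrf_eq0 mulf_neq0 // sqr_ge0.
apply: (diag_shift_corank_reduce (v := k) t_gt0 sS).
apply: diag_shift_corank_diag; apply/is_diag_mxP => p q pq; rewrite reduce_mxE.
have := @ord3_pair (lift k p) (lift k q) i j k.
rewrite (inj_eq lift_inj) !lift_eqF => /(_ pq isT isT ij ik jk).
case/orP => /andP[/eqP -> /eqP ->]; rewrite /t; last rewrite (symmetric_mxE j i sS).
  by field; rewrite Sik Sjk.
by field; rewrite Sik Sjk.
Qed.

Lemma three_le_card n (i j k : 'I_n) : i != j -> j != k -> i != k -> (3 <= n)%N.
Proof.
move=> ij jk ik; rewrite -[n]card_ord -[3%N]/(size [:: i; j; k]).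
have /card_uniqP <- : uniq [:: i; j; k] by rewrite /= !inE negb_or ij ik jk.
exact: max_card.
Qed.

Lemma exists_ord_avoid3 n (i j k : 'I_n) :
  (3 < n)%N -> exists v, [&& v != i, v != j & v != k].
Proof.
move=> n_gt3; have : (0 < #|[predC [:: i; j; k]]|)%N.
  rewrite -(leq_add2l #|[:: i; j; k]|) cardC card_ord addn1.
  by apply: leq_ltn_trans n_gt3; apply: card_size.
by case/card_gt0P => v; rewrite !inE !negb_or; exists v.
Qed.

Lemma exists_lift n (v a : 'I_n.+1) : v != a -> exists p, a = lift v p.
Proof. by case: (unliftP v a) => [p ->|->]; [exists p | rewrite eqxx]. Qed.

Lemma not_sign_nonneg_corank2 n (S : 'M[R]_n) :
  pd_mx S -> ~ sign_nonneg_mx S -> diag_shift_corank S 2.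
Proof.
elim: n S => [|m IH] S pdS nsg; first by case: nsg; exists 0; split; case.
have sS := proj1 pdS.
have reduce_step v t : 0 < t -> ~ sign_nonneg_mx (reduce_mx v t S) ->
    diag_shift_corank S 2.
  move=> t_gt0 nsgR; apply: (diag_shift_corank_reduce t_gt0 sS).
  exact: IH (reduce_mx_pd v (ltW t_gt0) pdS) nsgR.
have [[i [j [k neg]]]|no_neg] := boolp.pselect (exists i j k, S i j * S j k * S i k < 0);
    last first.
  have tri i j k : 0 <= S i j * S j k * S i k.
    by rewrite leNgt; apply/negP => neg; apply: no_neg; exists i, j, k.
  have [t t_gt0 st] := exists_sign_stable_reduction ord0 S.
  apply: (reduce_step ord0 t t_gt0) => sgR; apply: nsg.
  exact: sign_nonneg_mx_reduce t_gt0 sS st tri sgR.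
have [ij jk ik] := pd_mx_neg_triangle_neq pdS neg.
have [m2|m_neq2] := eqVneq m 2; first by subst m; exact: neg_triangle3_corank neg.
have [|v /and3P[vi vj vk]] := exists_ord_avoid3 i j k.
  by have := three_le_card ij jk ik; move: m_neq2; lia.
have [p ip] := exists_lift vi; have [q jq] := exists_lift vj; have [r kr] := exists_lift vk.
subst i j k; rewrite !(inj_eq lift_inj) in ij jk ik.
have [t t_gt0 st] := exists_sign_stable_reduction v S.
apply: (reduce_step v t t_gt0) => sgR.
have := sign_nonneg_mx_triangle sgR ij jk ik.
by rewrite leNgt (sign_stable_reduction_triangle st neg).
Qed.

End MrDual.

Theorem theorem3 (R : realType) (n : nat) (S : 'M[R]_n) :
  symmetric_mx S -> pd_mx S -> irreducible_mx S ->
  (mr_dual_is S n.-1 <-> sign_nonneg_mx S).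
Proof.
move=> sS pdS irrS; split.
  case=> _ mr_min; apply: boolp.contrapT => nsg.
  have [E [dE pES rk]] := not_sign_nonneg_corank2 pdS nsg.
  have := leq_trans (leq_add (mr_min _ (diag_shift_admissible pdS dE pES)) (leqnn 2)) rk.
  lia.
move=> sgS; have [E [dE pES rk]] := sign_nonneg_mx_shift sS sgS.
have adm := diag_shift_admissible pdS dE pES.
have rk_ge := mr_dual_admissible_rank_ge sS irrS sgS adm.
split=> [|r]; last exact: mr_dual_admissible_rank_ge sS irrS sgS.
by have -> : n.-1 = \rank (E - S) by apply/eqP; rewrite eqn_leq rk rk_ge.
Qed.
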